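(* Let $g\colon\mathbb R^d\to[0,+\infty)$ be a proper log-concave function whose support contains the origin in its interior. Then a set $U\subset\mathbb R^d$ is star-like with respect to $g$ if and only if $\langle p,u\rangle>-1$ for all $u\in U\cap\operatorname{supp}g$ and all $p\in\partial(-\ln g)(u)$.
   Context: $\operatorname{supp}g=\{x:g(x)>0\}$; proper: upper semi-continuous with finite positive integral. $\partial\psi(u)=\{p:\psi(y)\ge\psi(u)+\langle p,y-u\rangle\ \forall y\}$. Lifting $\mathrm{lift}(g)=\{(x,y)\in\mathbb R^d\times\mathbb R:x\in\overline{\operatorname{supp}g},|y|\le g(x)\}$. Fréchet normal cone $N_A(a_0)=\{v:\forall\varepsilon>0\,\exists\delta>0:\langle v,a-a_0\rangle\le\varepsilon|a-a_0|\ \forall a\in A,|a-a_0|\le\delta\}$. $U$ is star-like with respect to $g$ if for every $u\in U\cap\operatorname{supp}g$, $\langle(u,g(u)),\bar v\rangle>0$ for all nonzero $\bar v\in N_{\mathrm{lift}(g)}((u,g(u)))$. *)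

From HB Require Import structures.
From mathcomp Require Import all_boot all_order all_algebra.
From mathcomp Require Import all_classical all_reals all_analysis.
Set Implicit Arguments. Unset Strict Implicit. Unset Printing Implicit Defensive.
Import Order.TTheory GRing.Theory Num.Theory.
Import numFieldNormedType.Exports.
Local Open Scope classical_set_scope.
Local Open Scope ring_scope.

Section Defs.
Variable R : realType.

Definition dotv (d : nat) (x y : 'rV[R]_d) : R := \sum_(i < d) x ord0 i * y ord0 i.
Definition enorm (d : nat) (x : 'rV[R]_d) : R := Num.sqrt (dotv x x).

Definition dotp (d : nat) (a b : 'rV[R]_d * R) : R := dotv a.1 b.1 + a.2 * b.2.
Definition enormp (d : nat) (a : 'rV[R]_d * R) : R := Num.sqrt (dotp a a).

Definition supp (d : nat) (g : 'rV[R]_d -> R) : set 'rV[R]_d := [set x | 0 < g x].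

Fixpoint iter_integral (n : nat) : ('rV[R]_n -> \bar R) -> \bar R :=
  match n return ('rV[R]_n -> \bar R) -> \bar R with
  | 0%N => fun f => f 0
  | n'.+1 => fun f =>
      (\int[@lebesgue_measure R]_(t in setT)
         iter_integral (fun v : 'rV[R]_n' => f (row_mx (t%:M : 'rV[R]_1) v)))%E
  end.

Definition upper_semicontinuous (d : nat) (g : 'rV[R]_d -> R) : Prop :=
  forall x t, g x < t -> \forall y \near x, g y < t.

Definition proper_fun (d : nat) (g : 'rV[R]_d -> R) : Prop :=
  upper_semicontinuous g /\
  (0 < iter_integral (fun x => (g x)%:E))%E /\
  (iter_integral (fun x => (g x)%:E) < +oo)%E.

Definition log_concave (d : nat) (g : 'rV[R]_d -> R) : Prop :=
  forall x y (l : R), 0 < l < 1 ->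
    powR (g x) (1 - l) * powR (g y) l <= g ((1 - l) *: x + l *: y).

Definition neglog (d : nat) (g : 'rV[R]_d -> R) (x : 'rV[R]_d) : \bar R :=
  if 0 < g x then (- ln (g x))%:E else +oo%E.

Definition subdiff (d : nat) (psi : 'rV[R]_d -> \bar R) (u : 'rV[R]_d) : set 'rV[R]_d :=
  [set p | forall y, (psi u + (dotv p (y - u))%:E <= psi y)%E].

Definition lift (d : nat) (g : 'rV[R]_d -> R) : set ('rV[R]_d * R) :=
  [set a | closure (supp g) a.1 /\ `|a.2| <= g a.1].

Definition frechet_normal (d : nat) (A : set ('rV[R]_d * R)) (a0 : 'rV[R]_d * R)
  : set ('rV[R]_d * R) :=
  [set v | forall eps : R, 0 < eps -> exists2 delta : R, 0 < delta &
     forall a, A a -> enormp (a - a0) <= delta ->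
       dotp v (a - a0) <= eps * enormp (a - a0)].

Definition star_like (d : nat) (U : set 'rV[R]_d) (g : 'rV[R]_d -> R) : Prop :=
  forall u, U u -> supp g u ->
    forall v, frechet_normal (lift g) (u, g u) v -> v != 0 ->
      0 < dotp (u, g u) v.

End Defs.

From Pilot Require Import Defs.
From HB Require Import structures.
From mathcomp Require Import all_boot all_order all_algebra.
From mathcomp Require Import all_classical all_reals all_analysis.
From mathcomp Require Import ring lra.
Set Implicit Arguments. Unset Strict Implicit. Unset Printing Implicit Defensive.
Import Order.TTheory GRing.Theory Num.Theory.
Import numFieldNormedType.Exports.
Local Open Scope classical_set_scope.
Local Open Scope ring_scope.

(* A Fréchet normal (w, t) to lift g at (u, g u) has t >= 0, as lift g contains the
   vertical segment below (u, g u).  By log-concavity lift g also contains the points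
   (u + l (x - u), g u (1 + l L)) with L = ln g x - ln g u and l small, which yields
   <w, x - u> + t g(u) L <= 0 for all x in supp g.  For t > 0 this says exactly that
   w / (t g u) is a subgradient of -ln g at u; conversely every subgradient p gives the
   normal (g u p, 1).  In both cases <(u, g u), (w, t)> is a positive multiple of
   1 + <p, u>.  For t = 0 the vector w is nonzero and <w, x - u> <= 0 on supp g, and
   testing x = eps w near the origin gives <w, u> > 0. *)

Section RealInequalities.
Context {R : realType}.

Lemma lnB_le_divB1 (a b : R) : 0 < a -> 0 < b -> ln a - ln b <= a / b - 1.
Proof.
move=> a0 b0; have := expR_ge1Dx (ln a - ln b).
by rewrite expRD expRN !lnK ?posrE //; lra.
Qed.

Lemma le0_of_le_eps_mul (x y : R) : 0 <= y -> (forall e, 0 < e -> x <= e * y) -> x <= 0.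
Proof.
move=> y0 xle; apply/ler_addgt0Pr => e e0; rewrite add0r.
have y1 : 0 < y + 1 by lra.
apply: (le_trans (xle _ (divr_gt0 e0 y1))).
by rewrite mulrAC ler_pdivrMr // ler_wpM2l ?(ltW e0) //; lra.
Qed.

Lemma ler_dev_ratio (a y r e : R) :
  0 < a -> a / 2 <= y -> `|y - a| <= r -> r <= e * a / 2 ->
  a * (a / y - 1) + (y - a) <= e * r.
Proof.
move=> a0 ya yar rea; have y0 : 0 < y by lra.
have -> : a * (a / y - 1) + (y - a) = (y - a) ^+ 2 / y.
  by field; rewrite gt_eqF.
rewrite ler_pdivrMr //.
have [r1 r2] : y - a <= r /\ a - y <= r by move: yar; rewrite ler_norml; lra.
have sq : (y - a) ^+ 2 <= r ^+ 2 by nra.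
have r0 : 0 <= r by lra.
have re0 : 0 <= r * e.
  by rewrite mulr_ge0 // -(pmulr_lge0 _ a0); lra.
have h1 : r ^+ 2 <= r * (e * a / 2) by rewrite expr2 ler_wpM2l.
have h2 : r * (e * a / 2) <= e * r * y.
  have : 0 <= r * e * (y - a / 2) by rewrite mulr_ge0 //; lra.
  nra.
exact: le_trans sq (le_trans h1 h2).
Qed.

End RealInequalities.

Section InnerProduct.
Context {R : realType} {d : nat}.
Implicit Types (x y z : 'rV[R]_d) (a : 'rV[R]_d * R).

Lemma dotvC x y : dotv x y = dotv y x.
Proof. by apply: eq_bigr => i _; rewrite mulrC. Qed.

Lemma dotvDr x y z : dotv x (y + z) = dotv x y + dotv x z.
Proof. by rewrite /dotv -big_split; apply: eq_bigr => i _; rewrite !mxE mulrDr. Qed.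

Lemma dotvZr x (c : R) y : dotv x (c *: y) = c * dotv x y.
Proof. by rewrite /dotv mulr_sumr; apply: eq_bigr => i _; rewrite !mxE mulrCA. Qed.

Lemma dotvZl x (c : R) y : dotv (c *: x) y = c * dotv x y.
Proof. by rewrite dotvC dotvZr dotvC. Qed.

Lemma dotv0r x : dotv x 0 = 0.
Proof. by rewrite -(scale0r 0) dotvZr mul0r. Qed.

Lemma dotvBr x y z : dotv x (y - z) = dotv x y - dotv x z.
Proof. by rewrite dotvDr -scaleN1r dotvZr mulN1r. Qed.

Lemma dotv_ge0 x : 0 <= dotv x x.
Proof. by apply: sumr_ge0 => i _; rewrite -expr2 sqr_ge0. Qed.

Lemma dotv_gt0 x : x != 0 -> 0 < dotv x x.
Proof.
move=> x0; rewrite lt_def dotv_ge0 andbT; apply: contra x0 => /eqP xx0.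
apply/eqP/rowP => i; rewrite mxE.
have sq_ge0 j : predT j -> 0 <= x ord0 j * x ord0 j by rewrite -expr2 sqr_ge0.
have /eqP := @psumr_eq0P _ _ predT _ sq_ge0 xx0 i isT.
by rewrite mulf_eq0 orbb => /eqP.
Qed.

Lemma dotpZr a (c : R) x (s : R) : dotp a (c *: x, c * s) = c * dotp a (x, s).
Proof. by rewrite /dotp /= dotvZr mulrDr mulrCA. Qed.

Lemma pairB (x y : 'rV[R]_d) (s t : R) : (x, s) - (y, t) = (x - y, s - t).
Proof. by []. Qed.

Lemma enormp_ge0 a : 0 <= enormp a.
Proof. exact: sqrtr_ge0. Qed.

Lemma normr_le_enormp a : `|a.2| <= enormp a.
Proof.
rewrite /enormp /dotp -sqrtr_sqr ler_sqrt -?expr2 ?lerDr ?dotv_ge0 //.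
by rewrite addr_ge0 ?dotv_ge0 ?sqr_ge0.
Qed.

Lemma enormpZ (c : R) x (s : R) : 0 <= c -> enormp (c *: x, c * s) = c * enormp (x, s).
Proof.
move=> c0; rewrite /enormp /dotp /= dotvZl dotvZr.
have -> : c * (c * dotv x x) + c * s * (c * s) = c ^+ 2 * (dotv x x + s * s) by ring.
by rewrite sqrtrM ?sqr_ge0 // sqrtr_sqr ger0_norm.
Qed.

End InnerProduct.

Section FrechetNormal.
Context {R : realType} {d : nat}.

Lemma frechet_normal_segment (A : set ('rV[R]_d * R)) (x0 z : 'rV[R]_d) (y0 c l0 : R)
    (v : 'rV[R]_d * R) :
  0 < l0 -> (forall l, 0 < l <= l0 -> A (x0 + l *: z, y0 + l * c)) ->
  frechet_normal A (x0, y0) v -> dotp v (z, c) <= 0.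
Proof.
move=> l00 Aseg nv; apply: le0_of_le_eps_mul (enormp_ge0 (z, c)) _ => e e0.
have [del del0 Hdel] := nv e e0.
have zc1 : 0 < enormp (z, c) + 1 by have := enormp_ge0 (z, c); lra.
set l := Num.min l0 (del / (enormp (z, c) + 1)).
have l0' : 0 < l by rewrite lt_min l00 divr_gt0.
have lzc : l * enormp (z, c) <= del.
  have : l <= del / (enormp (z, c) + 1) by rewrite ge_min lexx orbT.
  rewrite ler_pdivlMr // => ldel.
  by apply: le_trans ldel; rewrite ler_wpM2l ?(ltW l0') //; lra.
have := Hdel _ (Aseg l _).
rewrite pairB [x0 + _]addrC [y0 + _]addrC !addrK enormpZ ?(ltW l0') // dotpZr.
rewrite ge_min lexx l0' => /(_ isT lzc).
by rewrite mulrCA ler_pM2l.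
Qed.

Lemma interior_dotv_gt0 (S : set 'rV[R]_d) (u w : 'rV[R]_d) :
  interior S 0 -> (forall x, S x -> dotv w (x - u) <= 0) -> w != 0 ->
  0 < dotv w u.
Proof.
move=> /nbhs_norm0P [e /= e0 Se] Sw w0.
have w1 : 0 < 2 * (`|w| + 1) by have := normr_ge0 w; lra.
set eta := e / (2 * (`|w| + 1)).
have eta0 : 0 < eta by rewrite divr_gt0.
have eta_w : `|eta *: w| < e.
  rewrite normrZ gtr0_norm // /eta mulrAC ltr_pdivrMr //.
  by rewrite ltr_pM2l //; lra.
have := Sw _ (Se _ eta_w); rewrite dotvBr dotvZr.
by have := dotv_gt0 w0; nra.
Qed.

End FrechetNormal.

Section Lift.
Context {R : realType} {d : nat} (g : 'rV[R]_d -> R).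

Lemma frechet_normal_lift_ge0 (u w : 'rV[R]_d) (t : R) :
  0 < g u -> frechet_normal (Defs.lift g) (u, g u) (w, t) -> 0 <= t.
Proof.
move=> gu0 nv.
have vertical l : 0 < l <= g u -> Defs.lift g (u + l *: 0, g u + l * -1).
  move=> /andP[l0 lgu]; rewrite scaler0 addr0; split.
  - by apply: subset_closure; exact: gu0.
  - by rewrite /= ger0_norm; lra.
have := frechet_normal_segment gu0 vertical nv.
by rewrite /dotp /= dotv0r add0r mulrN1 oppr_le0.
Qed.

Lemma frechet_normal_lift_of_subdiff (u p : 'rV[R]_d) :
  0 < g u -> subdiff (neglog g) u p -> frechet_normal (Defs.lift g) (u, g u) (g u *: p, 1).
Proof.
move=> gu0 hp e e0.
exists (Num.min (g u / 2) (e * g u / 2)); first by rewrite lt_min !divr_gt0 ?mulr_gt0.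
case=> x y [_ hy]; rewrite pairB le_min => /andP[r1 r2].
have /= ry := normr_le_enormp (x - u, y - g u).
set r := enormp _ in ry r1 r2 *.
have yu : g u / 2 <= y by move: (le_trans ry r1); rewrite ler_norml; lra.
have y0 : 0 < y by lra.
have yx : y <= g x by apply: le_trans hy; apply: ler_norm.
have gx0 : 0 < g x := lt_le_trans y0 yx.
have := hp x; rewrite /neglog gu0 gx0 lee_fin => sub.
have lnyx : ln y <= ln (g x) by rewrite ler_ln.
have lnuy := lnB_le_divB1 gu0 y0.
rewrite /dotp /= dotvZl mul1r.
(* the Fréchet error is at most (y - g u)^2 / y, which is of second order *)
apply: le_trans (ler_dev_ratio gu0 yu ry r2).
by rewrite lerD2r ler_pM2l //; lra.
Qed.

Hypothesis g_logc : log_concave g.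

Lemma log_concave_expR (u x : 'rV[R]_d) (l : R) :
  0 < g u -> 0 < g x -> 0 < l < 1 ->
  g u * expR (l * (ln (g x) - ln (g u))) <= g ((1 - l) *: u + l *: x).
Proof.
move=> gu0 gx0 l01; have := g_logc u x l01.
rewrite /powR (gt_eqF gu0) (gt_eqF gx0) -expRD.
have -> : (1 - l) * ln (g u) + l * ln (g x) = ln (g u) + l * (ln (g x) - ln (g u)).
  by ring.
by rewrite expRD lnK ?posrE.
Qed.

Lemma frechet_normal_lift_subgrad (u x w : 'rV[R]_d) (t : R) :
  0 < g u -> 0 < g x -> frechet_normal (Defs.lift g) (u, g u) (w, t) ->
  dotv w (x - u) + t * (g u * (ln (g x) - ln (g u))) <= 0.
Proof.
move=> gu0 gx0 nv; set L := ln (g x) - ln (g u).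
have L2 : 0 < `|L| + 2 by have := normr_ge0 L; lra.
have /andP[NL LL] : - `|L| <= L <= `|L| by rewrite -ler_norml.
have segment l : 0 < l <= (`|L| + 2)^-1 ->
    Defs.lift g (u + l *: (x - u), g u + l * (g u * L)).
  move=> /andP[l0]; rewrite -[_^-1]div1r ler_pdivlMr // => lL.
  have l01 : 0 < l < 1 by apply/andP; split; nra.
  have lL1 : 0 < 1 + l * L by nra.
  have -> : u + l *: (x - u) = (1 - l) *: u + l *: x.
    by rewrite scalerBr scalerBl scale1r addrA addrAC.
  have -> : g u + l * (g u * L) = g u * (1 + l * L) by ring.
  have below : g u * (1 + l * L) <= g ((1 - l) *: u + l *: x).
    by apply: le_trans (log_concave_expR gu0 gx0 l01); rewrite ler_pM2l // expR_ge1Dx.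
  split; last by rewrite /= ger0_norm // mulr_ge0 // ltW.
  by apply: subset_closure; apply: lt_le_trans below; rewrite mulr_gt0.
have := frechet_normal_segment _ segment nv.
by rewrite invr_gt0 => /(_ L2).
Qed.

Lemma frechet_normal_lift_subdiff (u w : 'rV[R]_d) (t : R) :
  0 < g u -> 0 < t -> frechet_normal (Defs.lift g) (u, g u) (w, t) ->
  subdiff (neglog g) u ((t * g u)^-1 *: w).
Proof.
move=> gu0 t0 nv y; rewrite /neglog gu0; case: ifPn => gy; last by rewrite leey.
have sub := frechet_normal_lift_subgrad gu0 gy nv.
have c0 : 0 < t * g u by rewrite mulr_gt0.
rewrite lee_fin dotvZl -(ler_pM2l c0) mulrDr mulrA mulfV ?gt_eqF // mul1r.
by lra.
Qed.

End Lift.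

Unset Implicit Arguments.

Theorem mainTheorem9 (R : realType) (d : nat) (g : 'rV[R]_d -> R)
  (g_ge0 : forall x, 0 <= g x)
  (g_proper : proper_fun g)
  (g_logc : log_concave g)
  (g_int0 : interior (supp g) 0)
  (U : set 'rV[R]_d) :
  star_like U g <->
  (forall u, U u -> supp g u ->
     forall p, subdiff (neglog g) u p -> -1 < dotv p u).
Proof.
split => [starU u Uu gu0 p p_sub | subU u Uu gu0 [w t] nv vnz].
- have nz : (g u *: p, 1 : R) != 0 by apply/negP => /eqP [] _ /eqP; rewrite oner_eq0.
  have := starU u Uu gu0 _ (frechet_normal_lift_of_subdiff gu0 p_sub) nz.
  rewrite /dotp /= dotvZr dotvC mulr1 -[X in 0 < _ + X]mulr1 -mulrDr pmulr_rgt0 //.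
  by lra.
- rewrite /dotp /= dotvC.
  have := frechet_normal_lift_ge0 gu0 nv; rewrite le_eqVlt => /predU1P[t0 | t_gt0].
  + rewrite -t0 mulr0 addr0 in nv vnz *.
    apply: interior_dotv_gt0 g_int0 _ _.
    * move=> x gx0; have := frechet_normal_lift_subgrad g_logc gu0 gx0 nv.
      by rewrite mul0r addr0.
    * by apply: contraNneq vnz => ->.
  + have := subU u Uu gu0 _ (frechet_normal_lift_subdiff g_logc gu0 t_gt0 nv).
    have c0 : 0 < t * g u by rewrite mulr_gt0.
    rewrite dotvZl -(ltr_pM2l c0) mulrA mulfV ?gt_eqF // mul1r.
    by lra.
Qed.
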